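(* Let $X\sim F$ be a real random variable with $P_F(a\le|X|\le b)=1$, where $0<a<b<\infty$, and let $\sigma^2=\sigma^2(F)=\mathrm{Var}_F(X)$. Let $$K^2=\frac{4}{\big(\frac ba+\frac ab\big)^2}$$ (with $K>0$), and let $\alpha$ satisfy $1-K^2<\alpha<1$. Then, with $c^2 = 1-\frac{\sqrt{1-\alpha}}{K}$ (which lies in $(0,1)$), $$P_F\Big(\sigma^2\le\frac{X^2}{c^2}\Big)\ge1-\alpha.$$ *)

From HB Require Import structures.
From mathcomp Require Export all_boot all_order all_algebra.
From mathcomp Require Export all_classical all_reals all_analysis.
Set Implicit Arguments. Unset Strict Implicit. Unset Printing Implicit Defensive.
Import Order.TTheory GRing.Theory Num.Theory.
Local Open Scope ring_scope.

Definition Ksq {R : realType} (a b : R) : R := 4 / (b / a + a / b) ^+ 2.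
Definition Kc {R : realType} (a b : R) : R := Num.sqrt (Ksq a b).
Definition csq {R : realType} (a b alpha : R) : R :=
  1 - Num.sqrt (1 - alpha) / Kc a b.

(* Put Y := X^2, so that a^2 <= Y <= b^2 almost surely, and write M for the
   mean of Y.  On [a^2, b^2] the parabola lies below its chord, so E[Y^2] is at
   most the chord value s := (a^2 + b^2) M - a^2 b^2.  The Paley-Zygmund
   argument, with the Cauchy-Schwarz step replaced by the AM-GM inequality
   Y 1_A <= lam Y^2 / 2 + 1_A / (2 lam) and lam chosen optimally, yields
   P(Y > c^2 M) >= (1 - c^2)^2 M^2 / s, and M^2 / s >= K^2 by the Kantorovich
   inequality, so the bound is (1 - c^2)^2 K^2 = 1 - alpha.  Finally
   Var X <= M, hence {Y > c^2 M} is contained in {Var X <= X^2 / c^2}. *)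
From mathcomp Require Import all_boot all_order all_algebra.
From mathcomp Require Import all_classical all_reals all_analysis.
From mathcomp Require Import measurable_realfun ess_sup_inf ring lra.
Set Implicit Arguments. Unset Strict Implicit. Unset Printing Implicit Defensive.
Import Order.TTheory GRing.Theory Num.Theory.
Local Open Scope ring_scope.
Local Open Scope classical_set_scope.

Section chord.
Variable R : realFieldType.
Implicit Types u v y t th lam p : R.

Definition chord u v y := (u + v) * y - u * v.

Lemma sqr_le_chord u v y : u <= y -> y <= v -> y ^+ 2 <= chord u v y.
Proof.
move=> uy yv; have : 0 <= (y - u) * (v - y) by rewrite mulr_ge0 ?subr_ge0.
rewrite /chord; nra.
Qed.

Lemma chord_gt0 u v y : 0 < u -> u <= y -> y <= v -> 0 < chord u v y.
Proof.
move=> u0 uy yv; have y0 : 0 < y by apply: lt_le_trans uy.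
exact: lt_le_trans (exprn_gt0 2 y0) (sqr_le_chord uy yv).
Qed.

Lemma kantorovich_le u v y : 0 < u -> u <= y -> y <= v ->
  4 * (u * v) / (u + v) ^+ 2 <= y ^+ 2 / chord u v y.
Proof.
move=> u0 uy yv; have s0 := chord_gt0 u0 uy yv.
have uv0 : 0 < (u + v) ^+ 2.
  by rewrite exprn_gt0 // addr_gt0 // (lt_le_trans u0 (le_trans uy yv)).
rewrite ler_pdivrMr // mulrAC ler_pdivlMr //.
(* the difference of the two sides is ((u + v) y - 2 u v)^2 *)
have : 0 <= ((u + v) * y - 2 * (u * v)) ^+ 2 by exact: sqr_ge0.
rewrite /chord in s0 *; nra.
Qed.

(* Pointwise form of the Paley-Zygmund step: y <= y [t < y] + t, then the AM-GM
   bound y <= lam y^2 / 2 + 1 / (2 lam) and y^2 <= chord u v y. *)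
Lemma le_chord_indicator u v t lam y : 0 < lam -> 0 <= t -> u <= y -> y <= v ->
  y + lam * (u * v) / 2 <= lam * (u + v) / 2 * y + ((t < y)%R)%:R / (2 * lam) + t.
Proof.
move=> l0 t0 uy yv; have := sqr_le_chord uy yv; rewrite /chord => ychord.
have [ty|yt] := ltrP t y; rewrite ?mulr1n ?mulr0n.
- have amgm : 0 <= (lam * y - 1) ^+ 2 / (2 * lam).
    by rewrite divr_ge0 ?sqr_ge0 // mulr_ge0 // ltW.
  have e : (lam * y - 1) ^+ 2 / (2 * lam) = lam * y ^+ 2 / 2 + 1 / (2 * lam) - y.
    by field; rewrite gt_eqF.
  rewrite e in amgm; nra.
- rewrite mul0r addr0; have := sqr_ge0 y; nra.
Qed.

Lemma chord_optimal_bound u v y th p : 0 < u -> u <= y -> y <= v -> th < 1 ->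
  let lam := (1 - th) * y / chord u v y in
  y + lam * (u * v) / 2 <= lam * (u + v) / 2 * y + (2 * lam)^-1 * p + th * y ->
  (1 - th) ^+ 2 * (y ^+ 2 / chord u v y) <= p.
Proof.
move=> u0 uy yv th1 lam H; have s0 := chord_gt0 u0 uy yv.
have lam_gt0 : 0 < lam by rewrite divr_gt0 // mulr_gt0 ?subr_gt0 // (lt_le_trans u0).
have lam_chord : lam * chord u v y = (1 - th) * y by rewrite /lam; field; rewrite gt_eqF.
have half_le : (1 - th) * y / 2 <= (2 * lam)^-1 * p.
  by move: H lam_chord; rewrite /chord; nra.
have -> : (1 - th) ^+ 2 * (y ^+ 2 / chord u v y) = 2 * lam * ((1 - th) * y / 2).
  by rewrite /lam; field; rewrite gt_eqF.
have lam2_gt0 : 0 < 2 * lam by rewrite mulr_gt0.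
by rewrite -[leRHS](mulVKf (lt0r_neq0 lam2_gt0)) ler_pM2l.
Qed.

End chord.

Section constants.
Variables (R : realType) (a b alpha : R).
Hypotheses (a_gt0 : 0 < a) (b_gt0 : 0 < b) (alpha_lt1 : alpha < 1).

Lemma Ksq_sqr : Ksq a b = 4 * (a ^+ 2 * b ^+ 2) / (a ^+ 2 + b ^+ 2) ^+ 2.
Proof. by rewrite /Ksq; field; rewrite !gt_eqF // addr_gt0 // exprn_gt0. Qed.

Lemma Ksq_gt0 : 0 < Ksq a b.
Proof. by rewrite Ksq_sqr divr_gt0 ?mulr_gt0 ?exprn_gt0 ?addr_gt0 ?exprn_gt0. Qed.

Lemma one_sub_csq : 1 - csq a b alpha = Num.sqrt (1 - alpha) / Kc a b.
Proof. by rewrite /csq opprB addrC subrK. Qed.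

Lemma sqr_one_sub_csq : (1 - csq a b alpha) ^+ 2 * Ksq a b = 1 - alpha.
Proof.
rewrite one_sub_csq expr_div_n /Kc !sqr_sqrtr ?subr_ge0 ?ltW ?Ksq_gt0 //.
by rewrite divfK // gt_eqF // Ksq_gt0.
Qed.

Lemma csq_lt1 : csq a b alpha < 1.
Proof.
by rewrite -subr_gt0 one_sub_csq divr_gt0 // sqrtr_gt0 ?Ksq_gt0 // subr_gt0.
Qed.

Lemma csq_gt0 : 1 - Ksq a b < alpha -> 0 < csq a b alpha.
Proof.
move=> Kalpha; suff : 1 - csq a b alpha < 1 by lra.
rewrite one_sub_csq ltr_pdivrMr ?sqrtr_gt0 ?Ksq_gt0 // mul1r /Kc ltr_sqrt ?Ksq_gt0 //.
lra.
Qed.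

End constants.

Section bounded_random_variables.
Context d (T : measurableType d) (R : realType) (P : probability T R).
Local Open Scope ereal_scope.

Lemma ae_bounded_Lfun (f : T -> R) (c r : R) : (1 <= r)%R ->
  measurable_fun setT f -> (\forall w \ae P, `|f w| <= c)%R -> f \in Lfun P r%:E.
Proof.
move=> r1 mf fc.
apply: (@Lfun_subset _ _ _ P r%:E +oo) => //; [exact: leey|exact: fin_num_measure|exact: leey|].
rewrite inE; apply/andP; split; rewrite inE //=.
rewrite /finite_norm unlock /Lnorm /=; case: ifP => _; last exact: ltry.
apply: (@le_lt_trans _ _ c%:E); last exact: ltry.
by apply/ess_supP; apply: filterS fc => w /=; rewrite lee_fin.
Qed.

Lemma variance_le_expectation_sqr (X : T -> R) : X \in Lfun P 2%:E ->
  'V_P[X] <= 'E_P[X ^+ 2].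
Proof.
move=> X2; rewrite varianceE //.
by rewrite -[leRHS]sube0 leeB // sqre_ge0.
Qed.

Lemma ae_probability1 (S : set T) : measurable S -> P S = 1 -> \forall w \ae P, S w.
Proof.
move=> mS PS; exists (~` S); split => //; first exact: measurableC.
by rewrite probability_setC // PS subee.
Qed.

Section ae_bounded.
Variables (Y : T -> R) (u v : R).
Hypotheses (mY : measurable_fun setT Y) (Y_ge0 : forall w, (0 <= Y w)%R).
Hypothesis u_ge0 : (0 <= u)%R.
Hypothesis Y_bounded : \forall w \ae P, (u <= Y w <= v)%R.

Lemma ae_bounded_Lfun1 : Y \in Lfun P 1.
Proof.
apply: (ae_bounded_Lfun (c := v)) => //; apply: filterS Y_bounded => w /andP[uY Yv].
by rewrite ger0_norm // (le_trans u_ge0).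
Qed.

Lemma ae_bounded_le : (u <= v)%R.
Proof.
have PT_gt0 : 0 < P setT by rewrite probability_setT lte01.
have [w /andP[uY Yv]] :=
  @filter_ex _ _ (ae_properfilter_algebraOfSetsType PT_gt0) _ Y_bounded.
exact: le_trans uY Yv.
Qed.

Lemma expectation_ae_bounded : u%:E <= 'E_P[Y] <= v%:E.
Proof.
rewrite -[u%:E](expectation_cst P) -[v%:E](expectation_cst P).
apply/andP; split; apply: expectation_le => //.
- by apply: filterS Y_bounded => w /andP[].
- by move=> w; exact: le_trans u_ge0 ae_bounded_le.
- by apply: filterS Y_bounded => w /andP[].
Qed.

Lemma measurable_superlevel (t : R) : measurable [set w | (t < Y w)%R].
Proof.
have := measurable_fun_ltr (measurable_cst t) mY measurableT (_ : measurable [set true]).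
by rewrite setTI; apply.
Qed.

Lemma expectation_le_chord_indicator (t lam M : R) : (0 < lam)%R -> (0 <= t)%R ->
  'E_P[Y] = M%:E ->
  (M + lam * (u * v) / 2)%:E <=
    (lam * (u + v) / 2 * M)%:E + (2 * lam)^-1%:E * P [set w | (t < Y w)%R] + t%:E.
Proof.
move=> lam_gt0 t_ge0 EY; have v_ge0 := le_trans u_ge0 ae_bounded_le.
set A := [set w | (t < Y w)%R].
have lam_ge0 := ltW lam_gt0.
have c_ge0 : (0 <= lam * (u * v) / 2)%R by rewrite divr_ge0 // !mulr_ge0.
have k_ge0 : (0 <= lam * (u + v) / 2)%R by rewrite divr_ge0 // mulr_ge0 // addr_ge0.
have mA : measurable A := measurable_superlevel t.
have Y1 := ae_bounded_Lfun1.
have A1 : (\1_A : T -> R) \in Lfun P 1 by apply/Lfun1_integrable; exact: integrable_indic.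
have key : 'E_P[(Y \+ cst (lam * (u * v) / 2))%R] <=
    'E_P[((lam * (u + v) / 2) \o* Y \+ (2 * lam)^-1 \o* (\1_A : T -> R) \+ cst t)%R].
  apply: expectation_le.
  - exact: measurable_funD mY (measurable_cst _).
  - apply: measurable_funD (measurable_cst _); apply: measurable_funD.
      exact: measurable_funM mY (measurable_cst _).
    exact: measurable_funM (measurable_indic mA) (measurable_cst _).
  - by move=> w /=; rewrite addr_ge0 ?Y_ge0.
  - by move=> w /=; rewrite !addr_ge0 ?(mulr_ge0 (Y_ge0 w) k_ge0) ?mulr_ge0 ?invr_ge0 ?mulr_ge0 // indicE.
  - apply: filterS Y_bounded => w /andP[uY Yv] /=.
    have -> : \1_A w = ((t < Y w)%R)%:R :> R.
      have [h|h] := boolP (t < Y w)%R; rewrite indicE; first by rewrite (mem_set (h : A w)).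
      by rewrite memNset //; exact/negP.
    by rewrite [(Y w * _)%R]mulrC; exact: le_chord_indicator.
rewrite expectationD ?Lfun_cst // !expectationD ?rpredD ?Lfun_scale ?Lfun_cst // in key.
by rewrite !expectation_cst !expectationZl // expectation_indic // EY -EFinD -EFinM in key.
Qed.

Lemma paley_zygmund_ae_bounded (th M : R) : (0 < u)%R -> (0 <= th < 1)%R ->
  'E_P[Y] = M%:E ->
  ((1 - th) ^+ 2 * (4 * (u * v) / (u + v) ^+ 2))%:E <= P [set w | (th * M < Y w)%R].
Proof.
move=> u_gt0 /andP[th_ge0 th_lt1] EY.
have /andP[uM Mv] := expectation_ae_bounded; rewrite EY !lee_fin in uM Mv.
pose lam := ((1 - th) * M / chord u v M)%R.
have lam_gt0 : (0 < lam)%R.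
  by rewrite divr_gt0 ?chord_gt0 // mulr_gt0 ?subr_gt0 // (lt_le_trans u_gt0).
have := expectation_le_chord_indicator lam_gt0 (mulr_ge0 th_ge0 (le_trans u_ge0 uM)) EY.
rewrite -(fineK (fin_num_measure P _ (measurable_superlevel _))) -EFinM -!EFinD lee_fin.
move=> /(chord_optimal_bound u_gt0 uM Mv th_lt1); rewrite -lee_fin; apply: le_trans.
by rewrite lee_fin ler_wpM2l ?sqr_ge0 ?kantorovich_le.
Qed.

End ae_bounded.
End bounded_random_variables.

Theorem theorem4p1 (d : measure_display) (T : measurableType d) (R : realType)
  (P : probability T R) (X : {RV P >-> R}) (a b alpha : R) :
  0 < a -> a < b ->
  P [set w | a <= `|X w| <= b] = 1%E ->
  1 - Ksq a b < alpha -> alpha < 1 ->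
  (P [set w | ('V_P[X] <= ((X w) ^+ 2 / csq a b alpha)%:E)%E]
     >= (1 - alpha)%:E)%E.
Proof.
move=> a_gt0 ab PX Kalpha alpha_lt1; have b_gt0 := lt_trans a_gt0 ab.
have mX : measurable_fun setT (X : T -> R) := @measurable_funPT _ _ _ _ X.
have X_bounded : \forall w \ae P, a <= `|X w| <= b.
  apply: ae_probability1 PX; rewrite -[X in measurable X]setTI.
  have -> : [set w | a <= `|X w| <= b] = (fun w => `|X w|) @^-1` `[a, b].
    by apply/seteqP; split => w /=; rewrite in_itv.
  exact: measurableT_comp.
have X2 : (X : T -> R) \in Lfun P 2%:E.
  apply: (ae_bounded_Lfun (c := b)) => //; first by rewrite ler1n.
  by apply: filterS X_bounded => w /andP[].
pose Y := ((X : T -> R) ^+ 2)%R.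
have Y_bounded : \forall w \ae P, a ^+ 2 <= Y w <= b ^+ 2.
  apply: filterS X_bounded => w /andP[aX Xb].
  rewrite /Y exprfctE -(real_normK (num_real (X w))) !expr2.
  by have n0 := normr_ge0 (X w); apply/andP; split; nra.
have mY : measurable_fun setT Y by rewrite /Y exprfctE; exact: measurable_funX.
have Y_ge0 w : 0 <= Y w by rewrite /Y exprfctE sqr_ge0.
have [M EY] : exists M, ('E_P[Y] = M%:E)%E.
  exists (fine 'E_P[Y])%E; rewrite fineK // expectation_fin_num //.
  exact: ae_bounded_Lfun1 mY Y_ge0 Y_bounded.
set th := csq a b alpha.
have th_gt0 : 0 < th := csq_gt0 a_gt0 b_gt0 Kalpha.
have th_itv : 0 <= th < 1 by rewrite ltW // csq_lt1.
have := paley_zygmund_ae_bounded mY Y_ge0 (sqr_ge0 a) Y_bounded (exprn_gt0 2 a_gt0) th_itv EY.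
rewrite -Ksq_sqr // sqr_one_sub_csq // => /le_trans; apply; apply: le_measure; rewrite ?inE.
- exact: measurable_superlevel.
- rewrite -[X in measurable X]setTI; apply: measurable_lee => //.
  by apply/measurable_EFinP; apply: measurable_funM (measurable_cst _); exact: measurable_funX.
move=> w /= thM_lt_Y; apply: le_trans (variance_le_expectation_sqr X2) _.
by rewrite -/Y EY lee_fin ler_pdivlMr // mulrC ltW // -exprfctE.
Qed.
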